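(* Let $4.999\le r\le 5$, $1\le\theta\le 2.2$, and $\delta\in\mathbb{R}$. Define $u_0=u_1=1$, $u_2=\theta+\delta$, and $u_n=(r-\theta)u_{n-1}-(r-2\theta)u_{n-2}-\theta u_{n-3}$ for $n\ge 3$. Let $q(x)=1-(r-\theta)x+(r-2\theta)x^2+\theta x^3$, and suppose the roots $\alpha,\beta,\gamma$ of $q$ are real with $\alpha<-1<0<\gamma<\beta<1$. If $\theta+\delta<\frac{1}{1-\gamma}$, then $u_{n+1}-u_n\to-\infty$ as $n\to\infty$. *)

From Stdlib Require Import Reals.
From Coquelicot Require Import Coquelicot.
Open Scope R_scope.

(* Triple (u_n, u_{n+1}, u_{n+2}) of the recurrence
   u_0 = u_1 = 1, u_2 = theta + delta,
   u_n = (r - theta) u_{n-1} - (r - 2 theta) u_{n-2} - theta u_{n-3}. *)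
Fixpoint u_triple (r theta delta : R) (n : nat) : R * R * R :=
  match n with
  | O => (1, 1, theta + delta)
  | S m =>
      let '(a, b, c) := u_triple r theta delta m in
      (b, c, (r - theta) * c - (r - 2 * theta) * b - theta * a)
  end.

Definition u_seq (r theta delta : R) (n : nat) : R :=
  fst (fst (u_triple r theta delta n)).

Definition q_poly (r theta x : R) : R :=
  1 - (r - theta) * x + (r - 2 * theta) * x ^ 2 + theta * x ^ 3.

(* The differences d_n = u_{n+1} - u_n obey the same recurrence as u, whose
   characteristic roots are the reciprocals 1/alpha, 1/beta, 1/gamma of the
   roots of q.  Hence d_n = A gamma^-n + B beta^-n + C alpha^-n, and since
   |1/alpha| < 1 < 1/beta < 1/gamma the first term dominates.  Its coefficient
   A is computed from d_0 = 0, d_1 = s - 1, d_2 (with s = theta + delta) and has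
   the sign of s (1 - gamma) - 1, which is negative exactly when
   s < 1 / (1 - gamma). *)

From Stdlib Require Import Reals Lra.
From Coquelicot Require Import Coquelicot.
Open Scope R_scope.

(* The coefficient of x^n when a sequence with initial values e0, e1, e2 is
   written in the basis x^n, y^n, z^n (Lagrange interpolation in the roots). *)
Definition root_weight (x y z e0 e1 e2 : R) : R :=
  (e2 - (y + z) * e1 + y * z * e0) / ((x - y) * (x - z)).

Section ThirdOrderRecurrence.

Variables c1 c2 c3 : R.

Lemma pow_root_rec (x : R) (n : nat) :
  x ^ 3 = c1 * x ^ 2 - c2 * x - c3 ->
  x ^ (S (S (S n))) = c1 * x ^ (S (S n)) - c2 * x ^ (S n) - c3 * x ^ n.
Proof.
  intros Hx.
  replace (x ^ (S (S (S n)))) with (x ^ 3 * x ^ n) by (simpl; ring).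
  rewrite Hx; simpl; ring.
Qed.

Lemma rec3_closed_form (x y z : R) (d : nat -> R) :
  x ^ 3 = c1 * x ^ 2 - c2 * x - c3 ->
  y ^ 3 = c1 * y ^ 2 - c2 * y - c3 ->
  z ^ 3 = c1 * z ^ 2 - c2 * z - c3 ->
  x <> y -> y <> z -> z <> x ->
  (forall n, d (S (S (S n))) = c1 * d (S (S n)) - c2 * d (S n) - c3 * d n) ->
  forall n, d n = root_weight x y z (d 0%nat) (d 1%nat) (d 2%nat) * x ^ n
                + root_weight y z x (d 0%nat) (d 1%nat) (d 2%nat) * y ^ n
                + root_weight z x y (d 0%nat) (d 1%nat) (d 2%nat) * z ^ n.
Proof.
  intros Hx Hy Hz Hxy Hyz Hzx Hd.
  set (A := root_weight x y z (d 0%nat) (d 1%nat) (d 2%nat)).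
  set (B := root_weight y z x (d 0%nat) (d 1%nat) (d 2%nat)).
  set (C := root_weight z x y (d 0%nat) (d 1%nat) (d 2%nat)).
  set (f := fun n => A * x ^ n + B * y ^ n + C * z ^ n).
  assert (Hf : forall n, f (S (S (S n))) = c1 * f (S (S n)) - c2 * f (S n) - c3 * f n).
  { intro n; unfold f.
    rewrite (pow_root_rec x n Hx), (pow_root_rec y n Hy), (pow_root_rec z n Hz); ring. }
  assert (Hxy' : x - y <> 0) by lra.
  assert (Hyz' : y - z <> 0) by lra.
  assert (Hzx' : z - x <> 0) by lra.
  assert (Hyx' : y - x <> 0) by lra.
  assert (Hzy' : z - y <> 0) by lra.
  assert (Hxz' : x - z <> 0) by lra.
  assert (Hwindow : forall n, d n = f n /\ d (S n) = f (S n) /\ d (S (S n)) = f (S (S n))).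
  { induction n as [|n [I0 [I1 I2]]].
    - unfold f, A, B, C, root_weight; simpl.
      repeat split; field; repeat split; assumption.
    - repeat split; [exact I1 | exact I2 |].
      rewrite Hd, Hf, I0, I1, I2; reflexivity. }
  intro n; apply Hwindow.
Qed.

End ThirdOrderRecurrence.

Lemma is_lim_seq_scal_geom_ratio (c x y : R) :
  Rabs y < x -> is_lim_seq (fun n => c * (y / x) ^ n) 0.
Proof.
  intros Hyx.
  replace (Finite 0) with (Rbar_mult c 0) by (simpl; f_equal; ring).
  apply is_lim_seq_scal_l.
  assert (Hx : 0 < x) by (pose proof (Rabs_pos y); lra).
  apply is_lim_seq_geom.
  rewrite Rabs_div by lra; rewrite (Rabs_right x) by lra.
  apply (Rmult_lt_reg_r x); [exact Hx |].
  unfold Rdiv; rewrite Rmult_assoc, Rinv_l by lra; lra.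
Qed.

Lemma is_lim_seq_dominant_geom_m_infty (A B C x y z : R) :
  A < 0 -> 1 < x -> Rabs y < x -> Rabs z < x ->
  is_lim_seq (fun n => A * x ^ n + B * y ^ n + C * z ^ n) m_infty.
Proof.
  intros HA Hx Hy Hz.
  apply is_lim_seq_ext with
    (u := fun n => x ^ n * (A + B * (y / x) ^ n + C * (z / x) ^ n)).
  { intro n; unfold Rdiv; rewrite !Rpow_mult_distr, !pow_inv.
    field; apply pow_nonzero; lra. }
  apply is_lim_seq_mult with (l1 := p_infty) (l2 := Finite A).
  - apply is_lim_seq_geom_p; exact Hx.
  - replace (Finite A) with (Finite (A + 0 + 0)) by (f_equal; ring).
    apply is_lim_seq_plus'; [apply is_lim_seq_plus'; [apply is_lim_seq_const |] |];
      apply is_lim_seq_scal_geom_ratio; assumption.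
  - apply is_Rbar_mult_p_infty_neg; exact HA.
Qed.

Lemma q_poly_root_inv (r theta x : R) :
  q_poly r theta x = 0 ->
  (/ x) ^ 3 = (r - theta) * (/ x) ^ 2 - (r - 2 * theta) * / x - theta.
Proof.
  intros Hq.
  assert (Hx : x <> 0) by (intro E; subst x; unfold q_poly in Hq; lra).
  apply (Rmult_eq_reg_r (x ^ 3)); [| apply pow_nonzero; exact Hx].
  transitivity ((r - theta) * (/ x) ^ 2 * x ^ 3 - (r - 2 * theta) * / x * x ^ 3
                - theta * x ^ 3 + q_poly r theta x).
  - unfold q_poly; field; exact Hx.
  - rewrite Hq; ring.
Qed.

Lemma q_poly_sum_inv_roots (r theta alpha beta gamma : R) :
  (forall x, q_poly r theta x = theta * (x - alpha) * (x - beta) * (x - gamma)) ->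
  / alpha + / beta + / gamma = r - theta.
Proof.
  intros H.
  pose proof (H 0) as H0; pose proof (H 1) as H1; pose proof (H (-1)) as Hm1.
  unfold q_poly in H0, H1, Hm1.
  assert (Hprod : theta * (alpha * beta * gamma) = -1) by lra.
  assert (Hpair : theta * (alpha * beta + beta * gamma + gamma * alpha) = theta - r) by lra.
  assert (Ha : alpha <> 0) by (intro E; rewrite E in Hprod; lra).
  assert (Hb : beta <> 0) by (intro E; rewrite E in Hprod; lra).
  assert (Hg : gamma <> 0) by (intro E; rewrite E in Hprod; lra).
  (* by [Hprod], each inverse root is minus theta times the other two roots *)
  replace (/ alpha) with (- theta * beta * gamma)
    by (apply (Rmult_eq_reg_l alpha); [field_simplify_eq; lra | exact Ha]).
  replace (/ beta) with (- theta * alpha * gamma)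
    by (apply (Rmult_eq_reg_l beta); [field_simplify_eq; lra | exact Hb]).
  replace (/ gamma) with (- theta * alpha * beta)
    by (apply (Rmult_eq_reg_l gamma); [field_simplify_eq; lra | exact Hg]).
  lra.
Qed.

Lemma u_triple_S (r theta delta : R) (n : nat) :
  u_triple r theta delta (S n) =
  (snd (fst (u_triple r theta delta n)), snd (u_triple r theta delta n),
   (r - theta) * snd (u_triple r theta delta n)
   - (r - 2 * theta) * snd (fst (u_triple r theta delta n))
   - theta * fst (fst (u_triple r theta delta n))).
Proof. simpl; destruct (u_triple r theta delta n) as [[a b] c]; reflexivity. Qed.

Lemma u_seq_S (r theta delta : R) (n : nat) :
  u_seq r theta delta (S n) = snd (fst (u_triple r theta delta n)).
Proof. unfold u_seq; rewrite u_triple_S; reflexivity. Qed.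

Lemma u_seq_SS (r theta delta : R) (n : nat) :
  u_seq r theta delta (S (S n)) = snd (u_triple r theta delta n).
Proof. rewrite u_seq_S, u_triple_S; reflexivity. Qed.

Lemma u_seq_rec (r theta delta : R) (n : nat) :
  u_seq r theta delta (S (S (S n))) =
  (r - theta) * u_seq r theta delta (S (S n))
  - (r - 2 * theta) * u_seq r theta delta (S n) - theta * u_seq r theta delta n.
Proof. rewrite !u_seq_SS, u_seq_S, u_triple_S; reflexivity. Qed.

Definition u_diff (r theta delta : R) (n : nat) : R :=
  u_seq r theta delta (S n) - u_seq r theta delta n.

Lemma u_diff_rec (r theta delta : R) (n : nat) :
  u_diff r theta delta (S (S (S n))) =
  (r - theta) * u_diff r theta delta (S (S n))
  - (r - 2 * theta) * u_diff r theta delta (S n) - theta * u_diff r theta delta n.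
Proof. unfold u_diff; rewrite (u_seq_rec _ _ _ (S n)), (u_seq_rec _ _ _ n); ring. Qed.

Lemma u_diff_init (r theta delta : R) :
  u_diff r theta delta 0 = 0 /\
  u_diff r theta delta 1 = theta + delta - 1 /\
  u_diff r theta delta 2 = (r - theta - 1) * (theta + delta) - (r - theta).
Proof. unfold u_diff, u_seq; simpl; repeat split; ring. Qed.

Lemma leading_root_weight_neg (c s gamma a b : R) :
  0 < gamma < 1 -> a < / gamma -> b < / gamma -> a + b + / gamma = c ->
  s < 1 / (1 - gamma) ->
  root_weight (/ gamma) a b 0 (s - 1) ((c - 1) * s - c) < 0.
Proof.
  intros Hg Ha Hb Hsum Hs.
  assert (Hs' : s * (1 - gamma) < 1).
  { apply (Rmult_lt_compat_r (1 - gamma)) in Hs; [| lra].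
    replace (1 / (1 - gamma) * (1 - gamma)) with 1 in Hs by (field; lra); exact Hs. }
  unfold root_weight, Rdiv.
  apply Rmult_neg_pos; [| apply Rinv_0_lt_compat, Rmult_lt_0_compat; lra].
  replace ((c - 1) * s - c - (a + b) * (s - 1) + a * b * 0)
    with ((s * (1 - gamma) - 1) * / gamma)
    by (replace (a + b) with (c - / gamma) by lra; field; lra).
  apply Rmult_neg_pos; [lra | apply Rinv_0_lt_compat; lra].
Qed.

Theorem mainTheorem8 (r theta delta alpha beta gamma : R) :
  4.999 <= r <= 5 ->
  1 <= theta <= 2.2 ->
  (forall x : R, q_poly r theta x = theta * (x - alpha) * (x - beta) * (x - gamma)) ->
  alpha < -1 -> 0 < gamma -> gamma < beta -> beta < 1 ->
  theta + delta < 1 / (1 - gamma) ->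
  is_lim_seq (fun n => u_seq r theta delta (S n) - u_seq r theta delta n) m_infty.
Proof.
  intros _ _ Hq Ha Hg Hgb Hb Hs.
  assert (Ha' : -1 < / alpha < 0).
  { split; [| apply Rinv_lt_0_compat; lra].
    replace (-1) with (/ -1) by field; apply Rinv_lt_contravar; lra. }
  assert (Hb' : 1 < / beta < / gamma).
  { split; [rewrite <- Rinv_1 |]; apply Rinv_lt_contravar; nra. }
  destruct (u_diff_init r theta delta) as [D0 [D1 D2]].
  pose proof (rec3_closed_form _ _ _ _ _ _ (u_diff r theta delta)
                (q_poly_root_inv r theta gamma ltac:(rewrite Hq; ring))
                (q_poly_root_inv r theta beta ltac:(rewrite Hq; ring))
                (q_poly_root_inv r theta alpha ltac:(rewrite Hq; ring))
                ltac:(lra) ltac:(lra) ltac:(lra) (u_diff_rec r theta delta)) as Hclosed.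
  rewrite D0, D1, D2 in Hclosed.
  eapply is_lim_seq_ext; [intro n; symmetry; apply Hclosed |].
  apply is_lim_seq_dominant_geom_m_infty.
  - apply leading_root_weight_neg; try lra.
    apply q_poly_sum_inv_roots in Hq; lra.
  - lra.
  - rewrite Rabs_right; lra.
  - rewrite Rabs_left; lra.
Qed.
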